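(* Let $|\cdot|$ be a norm on $\mathbb{R}^d$ with constants $c_1,c_2\in(0,\infty)$ such that $c_1\|x\|\le|x|\le c_2\|x\|$ for all $x$. Let $k\in\mathbb{N}$, $\eta\colon\mathbb{R}^d\to\mathbb{R}^k$, $\mu\in\mathbb{R}^k$, $A\colon\mathbb{R}^d\to\mathbb{R}$, and let $\rho\colon\mathbb{R}^d\to(0,\infty)$ be proportional to $x\mapsto\exp(\eta(x)^T\mu-A(x))$. Assume there exist an increasing function $\varphi\colon[0,\infty)\to\mathbb{R}$ and a point $x_0\in\mathbb{R}^d$ with $\eta(x)^T\mu-A(x)=-\varphi(|x-x_0|)$ for all $x\in\mathbb{R}^d$ (equivalently, $\rho$ is proportional to $x\mapsto\exp(-\varphi(|x-x_0|))$). Then: (i) $\rho$ is bounded away from $0$ and from $\infty$ on every compact subset of $\mathbb{R}^d$; (ii) with $R=4\tfrac{c_2}{c_1}\|x_0\|$ and $\alpha=\tfrac{c_1}{2c_2}$, one has $B_{\alpha\|x\|}(0)\subseteq G_{\rho(x)}$ for all $x$ with $\|x\|>R$.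
   Context: $\|\cdot\|$ is the Euclidean norm, $B_r(y)=\{z\in\mathbb{R}^d:\|z-y\|\le r\}$, and $G_t=\{y\in\mathbb{R}^d:\rho(y)\ge t\}$ for $t\ge0$. *)

From HB Require Import structures.
From mathcomp Require Import all_boot all_order all_algebra.
From mathcomp Require Import all_classical all_reals all_analysis.
Set Implicit Arguments. Unset Strict Implicit. Unset Printing Implicit Defensive.
Import Order.TTheory GRing.Theory Num.Theory.
Import numFieldNormedType.Exports.
Local Open Scope classical_set_scope.
Local Open Scope ring_scope.

Definition enorm (R : realType) (d : nat) (x : 'rV[R]_d) : R :=
  Num.sqrt (\sum_(i < d) (x ord0 i) ^+ 2).

Definition dotp (R : realType) (k : nat) (u v : 'rV[R]_k) : R :=
  \sum_(i < k) u ord0 i * v ord0 i.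

Definition eball (R : realType) (d : nat) (r : R) (y : 'rV[R]_d) : set 'rV[R]_d :=
  [set z | enorm (z - y) <= r].

Definition superlevel (R : realType) (d : nat) (rho : 'rV[R]_d -> R) (t : R)
  : set 'rV[R]_d := [set y | t <= rho y].

Definition is_norm (R : realType) (d : nat) (N : 'rV[R]_d -> R) : Prop :=
  [/\ forall x y, N (x + y) <= N x + N y,
      forall (a : R) x, N (a *: x) = `|a| * N x
    & forall x, N x = 0 -> x = 0].

From HB Require Import structures.
From mathcomp Require Import all_boot all_order all_algebra.
From mathcomp Require Import all_classical all_reals all_analysis.
From mathcomp Require Import ring lra.
Import Order.TTheory GRing.Theory Num.Theory.
Import numFieldNormedType.Exports.
Local Open Scope classical_set_scope.
Local Open Scope ring_scope.

(* Since rho x = C exp(-phi(|x - x0|)) with phi nondecreasing, rho is a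
   nonincreasing function of |x - x0|.  (i) On a compact K the values
   |x - x0| lie in some [0, T], so rho lies in [C exp(-phi T), C exp(-phi 0)].
   (ii) If ||x|| > 4 (c2/c1) ||x0|| and ||z|| <= c1/(2 c2) ||x||, then
   |z - x0| <= c2 ||z|| + c2 ||x0|| <= (3/4) c1 ||x|| <= c1 ||x|| - c2 ||x0||
   <= |x - x0|, hence rho z >= rho x. *)

Section NormFacts.
Context {R : realType} {d : nat} {N : 'rV[R]_d -> R}.
Hypothesis normN : is_norm N.

Lemma is_norm0 : N 0 = 0.
Proof. by case: normN => _ Nscale _; rewrite -(scale0r 0) Nscale normr0 mul0r. Qed.

Lemma is_normN x : N (- x) = N x.
Proof. by case: normN => _ Nscale _; rewrite -scaleN1r Nscale normrN normr1 mul1r. Qed.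

Lemma is_norm_ge0 x : 0 <= N x.
Proof.
case: normN => Ntri _ _.
have := Ntri x (- x); rewrite subrr is_norm0 is_normN; lra.
Qed.

Lemma is_norm_lerB x y : N x - N y <= N (x - y).
Proof. by case: normN => Ntri _ _; have := Ntri (x - y) y; rewrite subrK; lra. Qed.

End NormFacts.

Section EuclideanNorm.
Variables (R : realType) (d : nat).

Lemma enorm_le_mx_norm (x : 'rV[R]_d) : enorm x <= Num.sqrt d%:R * `|x|.
Proof.
have entry_le i : `|x ord0 i| <= `|x|.
  by rewrite [leRHS]mx_normrE (le_bigmax _ _ (ord0, i)).
rewrite -[`|x|]ger0_norm // -sqrtr_sqr -sqrtrM // ler_sqrt ?mulr_ge0 ?sqr_ge0 //.
rewrite -[d in d%:R]card_ord -sumr_const mulr_suml.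
by apply: ler_sum => i _; rewrite mul1r -real_normK ?num_real // lerXn2r ?nnegrE.
Qed.

Lemma compact_enorm_bounded (K : set 'rV[R]_d) :
  compact K -> exists B : R, forall x, K x -> enorm x <= B.
Proof.
move=> /compact_bounded [M [M_real normM]].
have /normM normK : M < `|M| + 1 by rewrite ltr_pwDr // real_ler_norm.
exists (Num.sqrt d%:R * (`|M| + 1)) => x Kx.
apply: le_trans (enorm_le_mx_norm x) _.
by rewrite ler_wpM2l ?sqrtr_ge0 ?normK.
Qed.

End EuclideanNorm.

Section EquivalentNorm.
Context {R : realType} {d : nat} {N : 'rV[R]_d -> R} {c1 c2 : R}.
Hypotheses (normN : is_norm N) (c1_gt0 : 0 < c1) (c2_gt0 : 0 < c2).
Hypothesis N_equiv : forall x, c1 * enorm x <= N x /\ N x <= c2 * enorm x.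

Lemma compact_norm_shift_bounded (x0 : 'rV[R]_d) (K : set 'rV[R]_d) :
  compact K -> exists T : R, forall x, K x -> N (x - x0) <= T.
Proof.
move=> /compact_enorm_bounded [B enormB]; exists (c2 * B + N x0) => x Kx.
case: normN => Ntri _ _; apply: le_trans (Ntri _ _) _.
rewrite is_normN // lerD2r; apply: le_trans (proj2 (N_equiv x)) _.
by rewrite ler_pM2l ?enormB.
Qed.

Lemma norm_shift_le_far (x0 x z : 'rV[R]_d) :
  4 * (c2 / c1) * enorm x0 < enorm x -> enorm z <= c1 / (2 * c2) * enorm x ->
  N (z - x0) <= N (x - x0).
Proof.
move=> x_far z_near.
have Nz : N (z - x0) <= c2 * enorm z + c2 * enorm x0.
  case: normN => Ntri _ _; apply: le_trans (Ntri _ _) _; rewrite is_normN //.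
  by apply: lerD; [exact: (proj2 (N_equiv z)) | exact: (proj2 (N_equiv x0))].
have Nx : c1 * enorm x - c2 * enorm x0 <= N (x - x0).
  have := is_norm_lerB normN x x0.
  have := proj1 (N_equiv x); have := proj2 (N_equiv x0); lra.
have zx : c2 * enorm z <= c1 / 2 * enorm x.
  have -> : c1 / 2 * enorm x = c2 * (c1 / (2 * c2) * enorm x).
    by field; rewrite gt_eqF.
  by rewrite ler_pM2l.
have x0x : 4 * c2 * enorm x0 <= c1 * enorm x.
  have -> : 4 * c2 * enorm x0 = c1 * (4 * (c2 / c1) * enorm x0).
    by field; rewrite gt_eqF.
  by rewrite ler_pM2l // ltW.
lra.
Qed.

End EquivalentNorm.

Lemma ler_expRN_nondecreasing (R : realType) (phi : R -> R) (C a b : R) :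
  (forall a b, 0 <= a -> a <= b -> phi a <= phi b) -> 0 < C ->
  0 <= a -> a <= b -> C * expR (- phi b) <= C * expR (- phi a).
Proof.
by move=> phi_mono C_gt0 a_ge0 ab; rewrite ler_pM2l // ler_expR lerN2 phi_mono.
Qed.

Theorem corollary1 (R : realType) (d k : nat) (N : 'rV[R]_d -> R) (c1 c2 : R)
  (eta : 'rV[R]_d -> 'rV[R]_k) (mu : 'rV[R]_k) (A : 'rV[R]_d -> R)
  (rho : 'rV[R]_d -> R) (phi : R -> R) (x0 : 'rV[R]_d) :
  is_norm N ->
  0 < c1 -> 0 < c2 ->
  (forall x, c1 * enorm x <= N x /\ N x <= c2 * enorm x) ->
  (forall x, 0 < rho x) ->
  (exists C : R, 0 < C /\ forall x, rho x = C * expR (dotp (eta x) mu - A x)) ->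
  (forall a b, 0 <= a -> a <= b -> phi a <= phi b) ->
  (forall x, dotp (eta x) mu - A x = - phi (N (x - x0))) ->
  (forall K : set 'rV[R]_d, compact K ->
     exists m M : R, 0 < m /\ forall x, K x -> m <= rho x /\ rho x <= M)
  /\
  (forall x, 4 * (c2 / c1) * enorm x0 < enorm x ->
     eball ((c1 / (2 * c2)) * enorm x) 0 `<=` superlevel rho (rho x)).
Proof.
move=> normN c1_gt0 c2_gt0 N_equiv _ [C [C_gt0 rhoE]] phi_mono phiE.
have rho_radial x : rho x = C * expR (- phi (N (x - x0))) by rewrite rhoE phiE.
have rho_le a b := @ler_expRN_nondecreasing R phi C a b phi_mono C_gt0.
split=> [K /(compact_norm_shift_bounded normN c2_gt0 N_equiv x0) [T NT]|x x_far z].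
  exists (C * expR (- phi T)), (C * expR (- phi 0)).
  split=> [|x Kx]; first by rewrite mulr_gt0 ?expR_gt0.
  rewrite rho_radial; split; apply: rho_le; rewrite ?is_norm_ge0 ?NT //.
rewrite /eball /superlevel /= subr0 => z_near.
rewrite !rho_radial; apply: rho_le; first exact: is_norm_ge0.
exact: (norm_shift_le_far normN c1_gt0 c2_gt0 N_equiv).
Qed.
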